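(* Let $G$ be a finite simple graph, let $s\ge1$ and let $e_1,\ldots,e_s$ be edges of $G$, not necessarily distinct. Suppose $(I(G)^{s+1}:e_1\cdots e_s)$ is a squarefree monomial ideal. Then for each $1\le i\le s$, \[(I(G)^{s+1}:e_1\cdots e_s)=\Big((I(G)^2:e_i)^s:\prod_{j\neq i}e_j\Big).\]
   Context: $I(G)=(uv\mid\{u,v\}\in E(G))\subseteq K[V(G)]$ is the edge ideal over a field $K$; each edge $e=\{a,b\}$ is identified with the monomial $ab$. *)

From HB Require Import structures.
From mathcomp Require Import all_boot all_algebra.
From mathcomp Require Import mpoly.
Set Implicit Arguments. Unset Strict Implicit. Unset Printing Implicit Defensive.
Import GRing.Theory.
Local Open Scope ring_scope.

Section Ideals.
Variables (n : nat) (K : fieldType).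
Notation P := {mpoly K[n]}.

Definition ideal_gen (S : P -> Prop) : P -> Prop :=
  fun p => exists gs : seq (P * P),
    (forall x, x \in gs -> S x.2) /\ p = \sum_(x <- gs) x.1 * x.2.

Definition ideal_mul (I J : P -> Prop) : P -> Prop :=
  ideal_gen (fun p => exists a b, I a /\ J b /\ p = a * b).

Definition ideal_pow (I : P -> Prop) (k : nat) : P -> Prop :=
  iter k (ideal_mul I) (ideal_gen (fun p => p = 1)).

Definition ideal_colon (I : P -> Prop) (f : P) : P -> Prop :=
  fun p => I (p * f).

Definition ideal_eq (I J : P -> Prop) : Prop := forall p, I p <-> J p.

Definition edge_mon (e : 'I_n * 'I_n) : P := 'X_e.1 * 'X_e.2.

Definition edge_ideal (G : rel 'I_n) : P -> Prop :=
  ideal_gen (fun p => exists a b, G a b /\ p = 'X_a * 'X_b).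

Definition squarefree_mon (m : 'X_{1..n}) : Prop := forall i, (m i <= 1)%N.

Definition squarefree_monomial_ideal (I : P -> Prop) : Prop :=
  exists S : 'X_{1..n} -> Prop, (forall m, S m -> squarefree_mon m) /\
    ideal_eq I (ideal_gen (fun p => exists m, S m /\ p = 'X_[m])).

End Ideals.

Definition simple_graph n (G : rel 'I_n) : Prop :=
  (forall a b, G a b = G b a) /\ (forall a, ~~ G a a).

(* A monomial x lies in (I^{s+1} : e_1...e_s) iff x e_1...e_s is divisible by
   a product of s+1 edges.  Write e_i = ab and J = (I^2 : ab).  A product of
   s+1 edges divisible by ab either contains ab, or has edges ap and bq, and
   x_p x_q lies in J; this gives the inclusion into (J^s : prod_{j<>i} e_j).
   Conversely J^s is contained in (I^{2s} : (ab)^s), so it remains to cancel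
   the s-1 surplus copies of ab from (I^{2s} : e_1...e_s (ab)^{s-1}), one at a
   time.  By Banerjee's even-connection argument such a colon is generated by
   the x_u x_v with u, v even-connected along the listed edges.  A connecting
   walk using ab more often than listed either shortens or contains a closed
   even walk at some w; but then x_w^2 would lie in the squarefree ideal
   (I^{s+1} : e_1...e_s), hence so would x_w or 1, whereas that ideal has no
   element of degree below 2. *)

From HB Require Import structures.
From mathcomp Require Import all_boot all_algebra.
From mathcomp Require Import mpoly.
From mathcomp Require Import zify.
Set Implicit Arguments. Unset Strict Implicit. Unset Printing Implicit Defensive.

(* Pointwise arithmetic on monomials built from the [U_(i)]: split on the
   equalities between indices, then forget everything but the coordinates. *)
Ltac mnm_lia :=
  rewrite ?mnmDE ?mnmBE ?mnm1E ?mnm0E;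
  repeat match goal with |- context [?a == ?b] =>
    case: (eqVneq a b) => [?|?]; subst end;
  rewrite ?eqxx /=;
  try match goal with H : is_true (?a != ?a) |- _ => by rewrite eqxx in H end;
  repeat match goal with |- context [@fun_of_multinom ?k ?m ?i] =>
    let z := fresh "z" in generalize (@fun_of_multinom k m i); intro z end;
  repeat match goal with H : _ |- _ => clear H end;
  lia.

Section Monomials.
Variable n : nat.
Implicit Types m : 'X_{1..n}.

Lemma lepm_add m1 m2 m1' m2' :
  (m1 <= m1')%MM -> (m2 <= m2')%MM -> (m1 + m2 <= m1' + m2')%MM.
Proof.
move=> /mnm_lepP le1 /mnm_lepP le2; apply/mnm_lepP => i; rewrite !mnmDE.
exact: leq_add.
Qed.

Lemma lem_mdeg m1 m2 : (m1 <= m2)%MM -> (mdeg m1 <= mdeg m2)%N.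
Proof. by move/mnm_lepP=> le; rewrite !mdegE; apply: leq_sum => i _. Qed.

Definition up_closed (M : 'X_{1..n} -> Prop) : Prop :=
  forall m1 m2, (m1 <= m2)%MM -> M m1 -> M m2.

Definition mset_add (M N : 'X_{1..n} -> Prop) m : Prop :=
  exists m1 m2, [/\ M m1, N m2 & (m1 + m2 <= m)%MM].

Definition mset_pow (M : 'X_{1..n} -> Prop) (k : nat) : 'X_{1..n} -> Prop :=
  iter k (mset_add M) (fun _ => True).

Lemma up_closed_mset_add M N : up_closed (mset_add M N).
Proof.
by move=> m1 m2 le [y [z [My Nz le1]]]; exists y, z; split => //; apply: lepm_trans le.
Qed.

End Monomials.

Section EvenWalks.
Variables (n : nat) (G : rel 'I_n).
Hypothesis G_sym : ssrbool.symmetric G.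
Hypothesis G_irr : irreflexive G.
Local Notation V := 'I_n.
Local Notation mon := 'X_{1..n}.
Implicit Types (m x y z : mon) (f g : V * V) (F X : seq (V * V)).

Definition edge_mnm f : mon := (U_(f.1) + U_(f.2))%MM.
Definition edges_mnm F : mon := (\big[+%MM/0%MM]_(f <- F) edge_mnm f)%MM.
Definition is_edge f : bool := G f.1 f.2.

(* [x^m] lies in [I(G)^k] *)
Definition in_edge_pow (k : nat) m : Prop :=
  exists X, [/\ size X = k, all is_edge X & (edges_mnm X <= m)%MM].

Definition edge_mset m : Prop := exists a b, G a b /\ (U_(a) + U_(b) <= m)%MM.

Lemma edges_mnm_nil : edges_mnm [::] = 0%MM.
Proof. exact: big_nil. Qed.

Lemma edges_mnm_cons f F : edges_mnm (f :: F) = (edge_mnm f + edges_mnm F)%MM.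
Proof. exact: big_cons. Qed.

Lemma edges_mnm_cat F1 F2 : edges_mnm (F1 ++ F2) = (edges_mnm F1 + edges_mnm F2)%MM.
Proof. exact: big_cat. Qed.

Lemma edges_mnm_rem f F : f \in F -> edges_mnm F = (edge_mnm f + edges_mnm (rem f F))%MM.
Proof. by move=> fF; rewrite /edges_mnm (perm_big _ (perm_to_rem fF)) big_cons. Qed.

Lemma mdeg_edges_mnm F : mdeg (edges_mnm F) = (2 * size F)%N.
Proof.
elim: F => [|f F IH]; first by rewrite edges_mnm_nil mdeg0.
by rewrite edges_mnm_cons mdegD IH /edge_mnm mdegD !mdeg1 /=; lia.
Qed.

Lemma edges_mnm_gt0 F w : (0 < edges_mnm F w)%N ->
  exists2 f, f \in F & (f.1 == w) || (f.2 == w).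
Proof.
elim: F => [|f F IH]; first by rewrite edges_mnm_nil mnm0E.
rewrite edges_mnm_cons mnmDE !mnmDE !mnm1E.
case: (boolP ((f.1 == w) || (f.2 == w))) => [fw _|]; first by exists f; rewrite ?mem_head.
case/norP => /negbTE -> /negbTE -> /= /IH [g gF gw].
by exists g; rewrite // inE gF orbT.
Qed.

Lemma edges_mnm_ltn F X : (size F < size X)%N ->
  exists w, (edges_mnm F w < edges_mnm X w)%N.
Proof.
move=> ltFX; apply/existsP; apply: contraTT ltFX => /existsPn geFX.
have /lem_mdeg : (edges_mnm X <= edges_mnm F)%MM.
  by apply/mnm_lepP => w; rewrite leqNgt geFX.
by rewrite !mdeg_edges_mnm -leqNgt; lia.
Qed.

Lemma in_edge_pow0 m : in_edge_pow 0 m.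
Proof.
by exists [::]; split => //; rewrite edges_mnm_nil; apply/mnm_lepP => i; rewrite mnm0E.
Qed.

Lemma in_edge_pow_lem k m m' : in_edge_pow k m -> (m <= m')%MM -> in_edge_pow k m'.
Proof. by case=> X [sX eX le] le'; exists X; split => //; apply: lepm_trans le'. Qed.

Lemma in_edge_pow_edges X : all is_edge X -> in_edge_pow (size X) (edges_mnm X).
Proof. by move=> eX; exists X; split => //; apply: lepm_refl. Qed.

Lemma in_edge_pow_add k1 k2 m1 m2 :
  in_edge_pow k1 m1 -> in_edge_pow k2 m2 -> in_edge_pow (k1 + k2) (m1 + m2)%MM.
Proof.
case=> X [<- eX leX] [Y [<- eY leY]]; exists (X ++ Y).
by rewrite size_cat all_cat eX eY edges_mnm_cat lepm_add.
Qed.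

Lemma up_closed_edge_mset : up_closed edge_mset.
Proof. by move=> m1 m2 le [a [b [Gab le1]]]; exists a, b; split => //; apply: lepm_trans le. Qed.

Lemma in_edge_powS k m : in_edge_pow k.+1 m <->
  exists f y, [/\ is_edge f, in_edge_pow k y & (edge_mnm f + y <= m)%MM].
Proof.
split=> [[[|f X] [//= [sX] /andP [ef eX] le]] | [f [y [ef [X [sX eX leX] le]]]]].
  exists f, (edges_mnm X); split => //; first by rewrite -sX; exact: in_edge_pow_edges.
  by rewrite -edges_mnm_cons.
exists (f :: X); rewrite /= sX ef eX edges_mnm_cons; split => //.
by apply: lepm_trans le; apply: lepm_add (lepm_refl _) leX.
Qed.

Lemma in_edge_powE k m : in_edge_pow k m <-> mset_pow edge_mset k m.
Proof.
elim: k m => [|k IH] m; first by split => // _; apply: in_edge_pow0.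
rewrite in_edge_powS; split.
  case=> f [y [ef /IH Ey le]]; exists (edge_mnm f), y; split => //.
  by exists f.1, f.2; split => //; apply: lepm_refl.
case=> m1 [y [[a [b [Gab le_ab]]] /IH Ey le]]; exists (a, b), y; split => //.
by apply: lepm_trans le; apply: lepm_add le_ab (lepm_refl _).
Qed.

Definition oends (fo : (V * V) * bool) : V * V :=
  if fo.2 then fo.1 else (fo.1.2, fo.1.1).

Lemma edge_mnm_oends fo : edge_mnm (oends fo) = edge_mnm fo.1.
Proof. by case: fo => [[a b] []] //; rewrite /edge_mnm addmC. Qed.

(* [even_walk u v P] says that [u] and [v] are even-connected along the oriented
   edges [P = (p1 p2), ..., (p_{2k-1} p_{2k})]: the walk
   u p1 p2 ... p_{2k} v alternates G-edges and the edges of [P]. *)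
Fixpoint even_walk (u v : V) (P : seq ((V * V) * bool)) : bool :=
  if P is fo :: P' then G u (oends fo).1 && even_walk (oends fo).2 v P' else G u v.

Definition walk_within (P : seq ((V * V) * bool)) F : Prop :=
  forall f, (count_mem f (map fst P) <= count_mem f F)%N.

Definition even_connected_dvd F x : Prop := exists u v P,
  [/\ even_walk u v P, walk_within P F & (U_(u) + U_(v) <= x)%MM].

Definition closed_walk_free F : Prop :=
  forall w P, even_walk w w P -> ~ walk_within P F.

Lemma even_walk_cat u v P1 fo P2 :
  even_walk u v (P1 ++ fo :: P2) =
  even_walk u (oends fo).1 P1 && even_walk (oends fo).2 v P2.
Proof. by elim: P1 u => [|g P1 IH] u //=; rewrite IH andbA. Qed.

Lemma even_walk_rev u v P :
  even_walk u v P -> even_walk v u (rev [seq (fo.1, ~~ fo.2) | fo <- P]).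
Proof.
elim: P u => [|[f o] P IH] u /=; first by rewrite G_sym.
case/andP=> Guf walkP; rewrite rev_cons -cats1 even_walk_cat /=.
by case: o Guf walkP => /= Guf /IH ->; rewrite G_sym Guf.
Qed.

Lemma walk_within_rev P F :
  walk_within P F -> walk_within (rev [seq (fo.1, ~~ fo.2) | fo <- P]) F.
Proof. by move=> within f; rewrite map_rev count_rev -map_comp; apply: within. Qed.

Lemma count_mem_remE (T : eqType) (a b : T) (s : seq T) : a \in s ->
  count_mem b s = ((a == b) + count_mem b (rem a s))%N.
Proof. by move=> as_; rewrite (permP (perm_to_rem as_)). Qed.

Lemma walk_within_rem P F f : f \in F -> walk_within P (rem f F) -> walk_within P F.
Proof.
by move=> fF within g; rewrite (count_mem_remE g fF); apply: leq_trans (within g) _; lia.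
Qed.

Lemma walk_within_cons_rem P F f o :
  f \in F -> walk_within P (rem f F) -> walk_within ((f, o) :: P) F.
Proof. by move=> fF within g; rewrite /= (count_mem_remE g fF) leq_add2l. Qed.

Lemma incident_edge g w : (g.1 == w) || (g.2 == w) -> is_edge g ->
  exists p o, [/\ edge_mnm g = (U_(w) + U_(p))%MM, G w p, p != w & oends (g, o) = (w, p)].
Proof.
case: g => a b /=; rewrite /is_edge /edge_mnm /= => /orP [/eqP <-|/eqP <-] Gab.
  by exists b, true; split => //; apply: contraTneq Gab => ->; rewrite G_irr.
exists a, false; split; [exact: addmC | by rewrite G_sym | | by []].
by apply: contraTneq Gab => ->; rewrite G_irr.
Qed.

(* Every edge of [F] on the walk is exchanged for the G-edge just before it,
   and the final G-edge of the walk is the extra one. *)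
Lemma even_walk_in_edge_pow P F u v : all is_edge F -> even_walk u v P ->
  walk_within P F -> in_edge_pow (size F).+1 (U_(u) + U_(v) + edges_mnm F)%MM.
Proof.
elim: P F u => [|fo P IH] F u eF /=.
  move=> Guv _; have := @in_edge_pow_edges ((u, v) :: F).
  by rewrite edges_mnm_cons /= /is_edge Guv eF; apply.
case/andP=> Gu walkP within.
have fF : fo.1 \in F.
  by rewrite -has_pred1 has_count; apply: leq_trans (within fo.1); rewrite /= eqxx.
have eF' : all is_edge (rem fo.1 F) by apply/allP=> g /mem_rem /(allP eF).
have within' : walk_within P (rem fo.1 F).
  by move=> g; have := within g; rewrite /= (count_mem_remE g fF) leq_add2l.
have eU : all is_edge [:: (u, (oends fo).1)] by rewrite /= /is_edge Gu.
have sF : (size (rem fo.1 F)).+1 = size F by rewrite size_rem //; case: (F) fF.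
have := in_edge_pow_add (in_edge_pow_edges eU) (IH _ _ eF' walkP within').
rewrite add1n sF => /in_edge_pow_lem; apply.
rewrite (edges_mnm_rem fF) edges_mnm_cons edges_mnm_nil.
rewrite -edge_mnm_oends; apply/mnm_lepP => i; mnm_lia.
Qed.

Lemma even_connected_dvd_extend F x f o w p c :
  f \in F -> oends (f, o) = (p, c) -> G w p -> (0 < x w)%N ->
  even_connected_dvd (rem f F) (x - U_(w) + U_(c))%MM -> even_connected_dvd F x.
Proof.
move=> fF ef Gwp xw [u [v [P [walkP withinP le_uv]]]].
have extend v' P' : even_walk c v' P' -> walk_within P' (rem f F) ->
    (U_(c) + U_(v') <= x - U_(w) + U_(c))%MM -> even_connected_dvd F x.
  move=> walk' within' /mnm_lepP le'; exists w, v', ((f, o) :: P'); split.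
  - by rewrite /= ef /= Gwp walk'.
  - exact: walk_within_cons_rem.
  - by apply/mnm_lepP => i; move: (le' i) xw; mnm_lia.
have [uc|uc] := eqVneq u c; first by rewrite uc in walkP le_uv; exact: extend walkP withinP le_uv.
have [vc|vc] := eqVneq v c.
  rewrite vc addmC in walkP le_uv.
  exact: extend (even_walk_rev walkP) (walk_within_rev withinP) le_uv.
exists u, v, P; split => //; first exact: walk_within_rem withinP.
by move/mnm_lepP: le_uv => le; apply/mnm_lepP => i; move: (le i) uc vc; mnm_lia.
Qed.

Lemma even_connected_dvd_of_colon F X x : all is_edge F -> all is_edge X ->
  (size F < size X)%N -> (edges_mnm X <= x + edges_mnm F)%MM -> even_connected_dvd F x.
Proof.
elim: {F}(size F).+1 {-2}F (ltnSn (size F)) X x => // k IH F ltFk X x eF eX ltFX leX.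
have [w ltw] := edges_mnm_ltn ltFX.
move/mnm_lepP: (leX) => leXi.
have xw : (0 < x w)%N by move: (leXi w); rewrite mnmDE; lia.
have [g gX gw] := edges_mnm_gt0 (leq_ltn_trans (leq0n _) ltw).
have [p [o [Eg Gwp pw _]]] := incident_edge gw (allP eX g gX).
have [xp0|xp] := posnP (x p); last first.
  exists w, p, [::]; split => //.
  by apply/mnm_lepP => i; move: xw xp pw; mnm_lia.
have Fp : (0 < edges_mnm F p)%N.
  by move: (leXi p); rewrite mnmDE xp0 (edges_mnm_rem gX) Eg; mnm_lia.
have [f fF fp] := edges_mnm_gt0 Fp.
have [c [o' [Ef _ _ ef]]] := incident_edge fp (allP eF f fF).
apply: (even_connected_dvd_extend fF ef Gwp xw).
have sF : size F = (size (rem f F)).+1 by rewrite size_rem //; case: (F) fF.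
have sX : size X = (size (rem g X)).+1 by rewrite size_rem //; case: (X) gX.
apply: (IH _ _ (rem g X)).
- by rewrite -ltnS -sF.
- by apply/allP=> h /mem_rem /(allP eF).
- by apply/allP=> h /mem_rem /(allP eX).
- by rewrite -ltnS -sF -sX.
apply/mnm_lepP => i; move: (leXi i) xw.
by rewrite (edges_mnm_rem gX) (edges_mnm_rem fF) Eg Ef; mnm_lia.
Qed.

(* A walk within [f :: F] that uses [f] more often than [F] allows uses it twice;
   between two consecutive uses the walk either repeats itself, and can be
   shortened, or closes up within [F]. *)
Lemma even_walk_within_cons F f u v P : closed_walk_free F -> f \in F ->
  even_walk u v P -> walk_within P (f :: F) ->
  exists P', even_walk u v P' /\ walk_within P' F.
Proof.
move=> free fF; elim: {P}(size P).+1 {-2}P (ltnSn (size P)) u v => // k IH P ltPk u v walkP.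
move=> within; have [leP|ltP] := leqP (count_mem f (map fst P)) (count_mem f F).
  exists P; split => // g; have := within g; rewrite /=.
  by have [<-|] := eqVneq f g.
pose isf := fun fo : (V * V) * bool => fo.1 == f.
have cP : count_mem f (map fst P) = count isf P by rewrite count_map.
have cF : (0 < count_mem f F)%N by rewrite -has_count has_pred1.
have hasP : has isf P by rewrite has_count -cP; apply: leq_ltn_trans ltP.
move: ltP walkP within ltPk; rewrite cP.
case/split_find: hasP => [[f1 o1] P1 Q /eqP /= f1E noP1].
have -> : count isf (rcons P1 (f1, o1) ++ Q) = (count isf Q).+1.
  by move: noP1; rewrite cat_rcons count_cat /= has_count /isf /= f1E eqxx -leqNgt leqn0 => /eqP ->.
rewrite ltnS => ltQ; have : has isf Q by rewrite has_count (leq_trans cF ltQ).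
case/split_find => [[f2 o2] P2 P3 /eqP /= f2E _].
subst f1 f2; rewrite !cat_rcons even_walk_cat even_walk_cat => walkP within ltPk.
case/and3P: walkP => walk1 walk2 walk3.
have countE g : count_mem g (map fst (P1 ++ (f, o1) :: P2 ++ (f, o2) :: P3)) =
    (count_mem g (map fst (P1 ++ P2 ++ P3)) + (f == g) * 2)%N.
  by rewrite !map_cat !count_cat /= map_cat count_cat /=; lia.
have [eo|o12] := eqVneq o1 o2.
  subst o2; apply: (IH (P1 ++ (f, o1) :: P3)).
  - by move: ltPk; rewrite !size_cat /= size_cat /=; lia.
  - by rewrite even_walk_cat walk1 walk3.
  - move=> g; apply: leq_trans (within g).
    by rewrite countE !map_cat !count_cat /=; lia.
exfalso; apply: (free (oends (f, o1)).2 P2).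
  have E : (oends (f, o2)).1 = (oends (f, o1)).2 by case: (o1) (o2) o12 => [] [].
  by move: walk2; rewrite E.
move=> g; have := within g; rewrite countE !map_cat !count_cat /=.
by have [<-|] := eqVneq f g; lia.
Qed.

Lemma closed_walk_free_cons F f :
  closed_walk_free F -> f \in F -> closed_walk_free (f :: F).
Proof.
move=> free fF w P walkP /(even_walk_within_cons free fF walkP) [P' [walkP']].
exact: free walkP'.
Qed.

Lemma in_edge_pow_cancel F f m : all is_edge F -> closed_walk_free F -> f \in F ->
  in_edge_pow (size F).+2 (m + edges_mnm (f :: F)) ->
  in_edge_pow (size F).+1 (m + edges_mnm F).
Proof.
move=> eF free fF [X [sX eX leX]].
have efF : all is_edge (f :: F) by rewrite /= (allP eF f fF).
have [|u [v [P [walkP withinP le_uv]]]] := even_connected_dvd_of_colon efF eX _ leX.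
  by rewrite sX.
have [P' [walkP' withinP']] := even_walk_within_cons free fF walkP withinP.
apply: in_edge_pow_lem (even_walk_in_edge_pow eF walkP' withinP') _.
exact: lepm_add le_uv (lepm_refl _).
Qed.

Lemma in_edge_pow_cancel_nseq F f j m : all is_edge F -> closed_walk_free F -> f \in F ->
  in_edge_pow (j + size F).+1 (m + edges_mnm (nseq j f ++ F)) ->
  in_edge_pow (size F).+1 (m + edges_mnm F).
Proof.
elim: j F => [|j IH] F eF free fF //.
have efF : all is_edge (f :: F) by rewrite /= (allP eF f fF).
have -> : nseq j.+1 f ++ F = nseq j f ++ f :: F by rewrite -[j.+1]addn1 nseqD -catA.
rewrite addSn -addnS.
move=> /(IH (f :: F) efF (closed_walk_free_cons free fF) (mem_head _ _)).
exact: in_edge_pow_cancel.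
Qed.

(* A closed walk at [w] puts [x_w^2] in the colon ideal, and a squarefree
   divisor of [x_w^2] has degree at most 1. *)
Lemma closed_walk_free_squarefree F : all is_edge F ->
  (forall m, in_edge_pow (size F).+1 (m + edges_mnm F) -> exists2 g,
     squarefree_mon g & (g <= m)%MM /\ in_edge_pow (size F).+1 (g + edges_mnm F)) ->
  closed_walk_free F.
Proof.
move=> eF sqf w P walkP withinP.
have [g g_sqf [/mnm_lepP le_g [X [sX _ leX]]]] := sqf _ (even_walk_in_edge_pow eF walkP withinP).
have /lem_mdeg : (g <= U_(w))%MM.
  by apply/mnm_lepP => i; move: (g_sqf i) (le_g i); mnm_lia.
move/lem_mdeg: leX; rewrite mdeg1 mdegD !mdeg_edges_mnm sX; lia.
Qed.

Section ColonByEdge.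
Variables a b : V.
Hypothesis Gab : G a b.

(* the monomials of [(I(G)^2 : ab)] *)
Definition edge_colon y : Prop := in_edge_pow 2 (y + edge_mnm (a, b))%MM.

Lemma edge_colon_edge f : is_edge f -> edge_colon (edge_mnm f).
Proof.
move=> ef; exists [:: f; (a, b)]; rewrite /= ef /is_edge Gab.
by rewrite !edges_mnm_cons edges_mnm_nil addm0 lepm_refl.
Qed.

Lemma edge_colon_pair p q : G a p -> G b q -> edge_colon (U_(p) + U_(q))%MM.
Proof.
move=> Gap Gbq; exists [:: (a, p); (b, q)]; rewrite /= /is_edge /= Gap Gbq.
by split => //; rewrite !edges_mnm_cons edges_mnm_nil /edge_mnm; apply/mnm_lepP => i; mnm_lia.
Qed.

Lemma in_edge_pow_sub_edge_colon_pow k z : in_edge_pow k z -> mset_pow edge_colon k z.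
Proof.
elim: k z => [|k IH] z //; case/in_edge_powS => f [y [ef Ey le]].
by exists (edge_mnm f), y; split => //; [exact: edge_colon_edge | exact: IH].
Qed.

Lemma in_edge_powS_sub_edge_colon k x : in_edge_pow k.+1 x ->
  exists y z, [/\ edge_colon y, in_edge_pow k z & (y + z <= x)%MM].
Proof.
case/in_edge_powS => f [z [ef Ez le]].
by exists (edge_mnm f), z; split => //; exact: edge_colon_edge.
Qed.

Lemma in_edge_pow_colonU k x c :
  in_edge_pow k.+2 (x + U_(c))%MM -> in_edge_pow k.+1 x.
Proof.
case=> X [sX eX /mnm_lepP leX].
have [lec|ltc] := leqP (edges_mnm X c) (x c).
  case: X sX eX leX lec => [|f X] //= [sX] /andP [_ eX] leX lec.
  exists X; split => //; apply/mnm_lepP => i; move: (leX i) lec.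
  by rewrite !edges_mnm_cons; mnm_lia.
have [g gX gc] := edges_mnm_gt0 (leq_ltn_trans (leq0n _) ltc).
have [p [_ [Eg _ _ _]]] := incident_edge gc (allP eX g gX).
exists (rem g X); split; first by rewrite size_rem // sX.
  by apply/allP=> h /mem_rem /(allP eX).
by apply/mnm_lepP => i; move: (leX i) ltc; rewrite (edges_mnm_rem gX) Eg; mnm_lia.
Qed.

(* A product of [k + 2] edges divisible by [ab] either contains [ab] or pairs
   its edges [a p] and [b q] into the element [x_p x_q] of [(I(G)^2 : ab)]. *)
Lemma colon_edge_sub_edge_colon k x : in_edge_pow k.+2 (x + edge_mnm (a, b))%MM ->
  exists y z, [/\ edge_colon y, in_edge_pow k z & (y + z <= x)%MM].
Proof.
move=> Ex; case: (Ex) => X [sX eX /mnm_lepP leX]; rewrite /edge_mnm /= in leX.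
have ab : a != b by apply: contraTneq Gab => ->; rewrite G_irr.
have [lea|lta] := leqP (edges_mnm X a) (x a).
  apply/in_edge_powS_sub_edge_colon/(@in_edge_pow_colonU _ _ b).
  by exists X; split => //; apply/mnm_lepP => i; move: (leX i) lea ab; mnm_lia.
have [leb|ltb] := leqP (edges_mnm X b) (x b).
  apply/in_edge_powS_sub_edge_colon/(@in_edge_pow_colonU _ _ a).
  by exists X; split => //; apply/mnm_lepP => i; move: (leX i) leb ab; mnm_lia.
have [g1 g1X g1a] := edges_mnm_gt0 (leq_ltn_trans (leq0n _) lta).
have [p [_ [Eg1 Gap _ _]]] := incident_edge g1a (allP eX g1 g1X).
have sX1 : size (rem g1 X) = k.+1 by rewrite size_rem // sX.
have eX1 : all is_edge (rem g1 X) by apply/allP=> h /mem_rem /(allP eX).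
have [pb|pb] := eqVneq p b.
  apply: in_edge_powS_sub_edge_colon; exists (rem g1 X); split => //.
  by apply/mnm_lepP => i; move: (leX i); rewrite (edges_mnm_rem g1X) Eg1 pb; mnm_lia.
have ltb1 : (x b < edges_mnm (rem g1 X) b)%N.
  by move: ltb ab pb; rewrite (edges_mnm_rem g1X) Eg1; mnm_lia.
have [g2 g2X g2b] := edges_mnm_gt0 (leq_ltn_trans (leq0n _) ltb1).
have [q [_ [Eg2 Gbq _ _]]] := incident_edge g2b (allP eX1 g2 g2X).
exists (U_(p) + U_(q))%MM, (edges_mnm (rem g2 (rem g1 X))); split.
- exact: edge_colon_pair.
- have := @in_edge_pow_edges (rem g2 (rem g1 X)); rewrite size_rem // sX1; apply.
  by apply/allP=> h /mem_rem /(allP eX1).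
apply/mnm_lepP => i; move: (leX i).
by rewrite (edges_mnm_rem g1X) (edges_mnm_rem g2X) Eg1 Eg2; mnm_lia.
Qed.

Lemma edge_colon_pow_sub_colon k y : mset_pow edge_colon k y ->
  in_edge_pow (2 * k) (y + edges_mnm (nseq k (a, b)))%MM.
Proof.
elim: k y => [|k IH] y; first by move=> _; apply: in_edge_pow0.
case=> y1 [y2 [Jy1 /IH Ey2 le]]; have := in_edge_pow_add Jy1 Ey2.
rewrite mulnS => /in_edge_pow_lem; apply; move/mnm_lepP: le => le.
by apply/mnm_lepP => i; move: (le i); rewrite /= edges_mnm_cons; mnm_lia.
Qed.

Theorem in_edge_pow_colon_edgeE F m : all is_edge F -> closed_walk_free ((a, b) :: F) ->
  in_edge_pow (size F).+2 (m + edges_mnm ((a, b) :: F))%MM <->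
  mset_pow edge_colon (size F).+1 (m + edges_mnm F)%MM.
Proof.
move=> eF free; split.
  rewrite edges_mnm_cons [(edge_mnm _ + _)%MM]addmC addmA.
  case/colon_edge_sub_edge_colon => y [z [Jy Ez le]].
  by exists y, z; split => //; exact: in_edge_pow_sub_edge_colon_pow.
move/edge_colon_pow_sub_colon => E.
have eabF : all is_edge ((a, b) :: F) by rewrite /= /is_edge Gab eF.
apply: (in_edge_pow_cancel_nseq (j := size F) eabF free (mem_head _ _)).
have -> : (size F + size ((a, b) :: F)).+1 = (2 * (size F).+1)%N by rewrite /=; lia.
apply: in_edge_pow_lem E _; apply/mnm_lepP => i.
by rewrite /= edges_mnm_cat !edges_mnm_cons; mnm_lia.
Qed.

End ColonByEdge.

End EvenWalks.

Import GRing.Theory.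
Local Open Scope ring_scope.

Section MonomialIdeals.
Variables (n : nat) (K : fieldType).
Local Notation P := {mpoly K[n]}.
Local Notation mon := 'X_{1..n}.
Implicit Types (M : mon -> Prop) (S I J : P -> Prop) (p q : P).

(* an ideal when [M] is up-closed *)
Definition monomial_ideal M : P -> Prop := fun p => forall m, m \in msupp p -> M m.

Lemma monomial_ideal0 M : monomial_ideal M 0.
Proof. by move=> m; rewrite mcoeff_msupp mcoeff0 eqxx. Qed.

Lemma monomial_idealD M p q :
  monomial_ideal M p -> monomial_ideal M q -> monomial_ideal M (p + q).
Proof. by move=> Mp Mq m /msuppD_le; rewrite mem_cat => /orP [/Mp|/Mq]. Qed.

Lemma monomial_idealMl M p q :
  up_closed M -> monomial_ideal M q -> monomial_ideal M (p * q).
Proof.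
move=> upM Mq m /msuppM_le /allpairsP [[m1 m2] [/= _ m2q ->]].
by apply: upM (Mq _ m2q); rewrite addmC lem_addr.
Qed.

Lemma monomial_idealX M m : monomial_ideal M 'X_[m] <-> M m.
Proof.
split=> [|Mm m']; first by apply; rewrite msuppX mem_seq1.
by rewrite msuppX mem_seq1 => /eqP ->.
Qed.

Lemma monomial_ideal_ext M M' : (forall m, M m <-> M' m) ->
  ideal_eq (monomial_ideal M) (monomial_ideal M').
Proof. by move=> MM' p; split=> Mp m /Mp /MM'. Qed.

Lemma ideal_gen0 S : ideal_gen S 0.
Proof. by exists [::]; rewrite big_nil. Qed.

Lemma ideal_genD S p q : ideal_gen S p -> ideal_gen S q -> ideal_gen S (p + q).
Proof.
case=> gs1 [S1 ->] [gs2 [S2 ->]]; exists (gs1 ++ gs2); split; last by rewrite big_cat.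
by move=> x; rewrite mem_cat => /orP [/S1|/S2].
Qed.

Lemma ideal_genMl S c p : ideal_gen S p -> ideal_gen S (c * p).
Proof.
case=> gs [Sgs ->]; exists [seq (c * x.1, x.2) | x <- gs]; split.
  by move=> x /mapP [y /Sgs Sy ->].
by rewrite big_map mulr_sumr; apply: eq_bigr => x _; rewrite mulrA.
Qed.

Lemma ideal_genX S m m' : S 'X_[m] -> (m <= m')%MM -> ideal_gen S 'X_[m'].
Proof.
move=> Sm le; exists [:: ('X_[m' - m], 'X_[m])]; split; first by move=> x /[!inE] /eqP ->.
by rewrite big_seq1 /= -mpolyXD submK.
Qed.

Lemma ideal_gen_ext S S' : (forall p, S p <-> S' p) -> ideal_eq (ideal_gen S) (ideal_gen S').
Proof. by move=> SS' p; split=> -[gs [Sgs ->]]; exists gs; split=> // x /Sgs /SS'. Qed.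

Lemma ideal_eq_trans I J L : ideal_eq I J -> ideal_eq J L -> ideal_eq I L.
Proof. by move=> IJ JL p; rewrite IJ JL. Qed.

Lemma ideal_eq_sym I J : ideal_eq I J -> ideal_eq J I.
Proof. by move=> IJ p; rewrite IJ. Qed.

Lemma ideal_mul_eq I I' J J' :
  ideal_eq I I' -> ideal_eq J J' -> ideal_eq (ideal_mul I J) (ideal_mul I' J').
Proof.
move=> II' JJ'; apply: ideal_gen_ext => p.
by split=> -[x [y [/II' Ix [/JJ' Jy ->]]]]; exists x, y.
Qed.

Lemma ideal_pow_eq I I' k : ideal_eq I I' -> ideal_eq (ideal_pow I k) (ideal_pow I' k).
Proof. by move=> II'; elim: k => [|k IH] //; apply: ideal_mul_eq. Qed.

Lemma ideal_colon_eq I I' f : ideal_eq I I' -> ideal_eq (ideal_colon I f) (ideal_colon I' f).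
Proof. by move=> II' p; apply: II'. Qed.

Lemma ideal_gen_sub_monomial S M : up_closed M -> (forall p, S p -> monomial_ideal M p) ->
  forall p, ideal_gen S p -> monomial_ideal M p.
Proof.
move=> upM SM p [gs [Sgs ->]]; elim: gs Sgs => [|x gs IH] Sgs.
  by rewrite big_nil; apply: monomial_ideal0.
rewrite big_cons; apply: monomial_idealD.
  by apply: monomial_idealMl => //; apply/SM/Sgs/mem_head.
by apply: IH => y gy; apply/Sgs; rewrite inE gy orbT.
Qed.

Lemma monomial_ideal_sub_gen S M : (forall m, M m -> ideal_gen S 'X_[m]) ->
  forall p, monomial_ideal M p -> ideal_gen S p.
Proof.
move=> MS p Mp; rewrite (mpolyE p) big_seq; apply: big_ind.
- exact: ideal_gen0.
- exact: ideal_genD.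
by move=> m /Mp /MS; rewrite -mul_mpolyC; apply: ideal_genMl.
Qed.

Lemma ideal_gen_monomial S M : up_closed M -> (forall p, S p -> monomial_ideal M p) ->
  (forall m, M m -> ideal_gen S 'X_[m]) -> ideal_eq (ideal_gen S) (monomial_ideal M).
Proof.
move=> upM SM MS p; split; first exact: ideal_gen_sub_monomial.
exact: monomial_ideal_sub_gen.
Qed.

Lemma ideal_mul_monomial M N :
  ideal_eq (ideal_mul (monomial_ideal M) (monomial_ideal N)) (monomial_ideal (mset_add M N)).
Proof.
apply: ideal_gen_monomial; first exact: up_closed_mset_add.
  move=> _ [p [q [Mp [Nq ->]]]] m /msuppM_le /allpairsP [[m1 m2] [/= m1p m2q ->]].
  by exists m1, m2; split; [apply: Mp | apply: Nq | apply: lepm_refl].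
move=> m [m1 [m2 [Mm1 Nm2 le]]]; apply: ideal_genX le.
by exists 'X_[m1], 'X_[m2]; rewrite !monomial_idealX mpolyXD.
Qed.

Lemma ideal_pow_monomial M k :
  ideal_eq (ideal_pow (monomial_ideal M) k) (monomial_ideal (mset_pow M k)).
Proof.
elim: k => [|k IH].
  apply: ideal_gen_monomial => // m _.
  by exists [:: ('X_[m], 1)]; split; [move=> x /[!inE] /eqP -> | rewrite big_seq1 mulr1].
apply: ideal_eq_trans (ideal_mul_eq (fun p => iff_refl _) IH) _.
exact: ideal_mul_monomial.
Qed.

Lemma ideal_colon_monomial M f : ideal_eq (ideal_colon (monomial_ideal M) 'X_[f])
  (monomial_ideal (fun m => M (m + f)%MM)).
Proof.
move=> p; rewrite /ideal_colon /monomial_ideal; split=> Mp m.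
  by move=> mp; apply: Mp; rewrite (perm_mem (msuppMX p f)) addmC map_f.
by rewrite (perm_mem (msuppMX p f)) => /mapP [m' /Mp Mm' ->]; rewrite addmC.
Qed.

Lemma ideal_colon_pow_monomial I M k f : ideal_eq I (monomial_ideal M) ->
  ideal_eq (ideal_colon (ideal_pow I k) 'X_[f])
           (monomial_ideal (fun m => mset_pow M k (m + f)%MM)).
Proof.
move=> IM; apply: ideal_eq_trans (ideal_colon_eq _ (ideal_pow_eq _ IM)) _.
apply: ideal_eq_trans (ideal_colon_eq _ (ideal_pow_monomial _ _)) _.
exact: ideal_colon_monomial.
Qed.

Lemma squarefree_monomial_ideal_dvd I M : ideal_eq I (monomial_ideal M) ->
  squarefree_monomial_ideal I ->
  forall m, M m -> exists2 g, squarefree_mon g & (g <= m)%MM /\ M g.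
Proof.
move=> IM [S [S_sqf SE]] m Mm; have {}SE := ideal_eq_trans (ideal_eq_sym IM) SE.
pose gens p := exists g, S g /\ p = 'X_[g].
pose MS g := exists2 g', S g' & (g' <= g)%MM.
have upMS : up_closed MS.
  by move=> g1 g2 le [g' Sg' le']; exists g'; rewrite // (lepm_trans le' le).
have gensMS p : gens p -> monomial_ideal MS p.
  by move=> [g [Sg ->]] g'; rewrite msuppX mem_seq1 => /eqP ->; exists g; rewrite ?lepm_refl.
have /(ideal_gen_sub_monomial upMS gensMS) : ideal_gen gens 'X_[m].
  by apply/SE/monomial_idealX.
move=> /(_ m); rewrite msuppX mem_seq1 eqxx => /(_ isT) [g Sg le].
exists g; first exact: S_sqf.
split=> //; apply/monomial_idealX/SE.
by exists [:: (1, 'X_[g])]; split; [move=> x /[!inE] /eqP ->; exists g | rewrite big_seq1 mul1r].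
Qed.

End MonomialIdeals.

Section EdgeIdeals.
Variables (n : nat) (K : fieldType) (G : rel 'I_n).

Lemma edge_ideal_monomial : ideal_eq (@edge_ideal n K G) (monomial_ideal (edge_mset G)).
Proof.
apply: ideal_gen_monomial; first exact: up_closed_edge_mset.
  move=> _ [a [b [Gab ->]]] m; rewrite -mpolyXD msuppX mem_seq1 => /eqP ->.
  by exists a, b; split => //; apply: lepm_refl.
by move=> m [a [b [Gab le]]]; apply: ideal_genX le; exists a, b; rewrite mpolyXD.
Qed.


Lemma edge_monE (f : 'I_n * 'I_n) : edge_mon K f = 'X_[edge_mnm f].
Proof. by rewrite /edge_mon mpolyXD. Qed.

Lemma prod_edge_mon s (e : 'I_s -> 'I_n * 'I_n) (A : pred 'I_s) :
  \prod_(j < s | A j) edge_mon K (e j) = 'X_[edges_mnm [seq e j | j <- enum A]].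
Proof.
rewrite /edges_mnm big_map big_enum_cond /=.
rewrite (big_morph _ (@mpolyXD n K) (@mpolyX0 n K)).
by apply: eq_big => [j|j _]; rewrite ?andbT ?edge_monE.
Qed.

Lemma prod_edge_mon_D1 s (e : 'I_s -> 'I_n * 'I_n) (i : 'I_s) :
  \prod_(j < s) edge_mon K (e j) =
  'X_[edges_mnm (e i :: [seq e j | j <- enum (fun j => j != i)])].
Proof. by rewrite (bigD1 i) //= prod_edge_mon edges_mnm_cons mpolyXD edge_monE. Qed.

Lemma colon_edge_pow_monomial k f :
  ideal_eq (ideal_colon (ideal_pow (@edge_ideal n K G) k) 'X_[f])
           (monomial_ideal (fun m => in_edge_pow G k (m + f)%MM)).
Proof.
apply: ideal_eq_trans (ideal_colon_pow_monomial _ _ edge_ideal_monomial) _.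
by apply: monomial_ideal_ext => m; rewrite in_edge_powE.
Qed.

Lemma closed_walk_free_of_squarefree_colon F : all (is_edge G) F ->
  squarefree_monomial_ideal
    (ideal_colon (ideal_pow (@edge_ideal n K G) (size F).+1) 'X_[edges_mnm F]) ->
  closed_walk_free G F.
Proof.
move=> eF sqf; apply: closed_walk_free_squarefree => // m.
exact: squarefree_monomial_ideal_dvd (colon_edge_pow_monomial _ _) sqf m.
Qed.

End EdgeIdeals.

Theorem theorem3p8 (K : fieldType) (n : nat) (G : rel 'I_n)
  (s : nat) (e : 'I_s -> 'I_n * 'I_n) :
  simple_graph G ->
  (1 <= s)%N ->
  (forall j, G (e j).1 (e j).2) ->
  squarefree_monomial_ideal
    (ideal_colon (ideal_pow (@edge_ideal n K G) s.+1)
                 (\prod_(j < s) @edge_mon n K (e j))) ->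
  forall i : 'I_s,
    ideal_eq
      (ideal_colon (ideal_pow (@edge_ideal n K G) s.+1)
                   (\prod_(j < s) @edge_mon n K (e j)))
      (ideal_colon
         (ideal_pow (ideal_colon (ideal_pow (@edge_ideal n K G) 2) (@edge_mon n K (e i))) s)
         (\prod_(j < s | j != i) @edge_mon n K (e j))).
Proof.
move=> [G_sym G_irr] s_gt0 e_edge sqf i.
have G_irr' : irreflexive G by move=> a; apply/negbTE.
rewrite (prod_edge_mon_D1 _ _ i) (prod_edge_mon _ _ (fun j => j != i)) edge_monE in sqf *.
set F := [seq e j | j <- enum _] in sqf *.
have eF : all (is_edge G) F by apply/allP => _ /mapP [j _ ->]; apply: e_edge.
have sF : s = (size F).+1 by rewrite size_map -cardE cardC1 card_ord prednK.
rewrite sF; move: sqf; rewrite sF; case: (e i) (e_edge i) => a b Gab sqf.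
rewrite /= in Gab.
have eabF : all (is_edge G) ((a, b) :: F) by rewrite /= /is_edge Gab eF.
have JE := @colon_edge_pow_monomial n K G 2 (edge_mnm (a, b)).
apply: ideal_eq_trans (@colon_edge_pow_monomial n K G _ _) _.
apply: ideal_eq_trans _ (ideal_eq_sym (ideal_colon_pow_monomial _ _ JE)).
apply: monomial_ideal_ext => m; apply: in_edge_pow_colon_edgeE => //.
exact: (@closed_walk_free_of_squarefree_colon n K G _ eabF sqf).
Qed.
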